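(* Let $(X,d)$ be a complete Alexandrov space with curvature bounded above by $\kappa$. Let $f:X\to(-\infty,\infty]$ be a convex, lower semi-continuous function (not identically $+\infty$), and let $G\subset X$ be a closed, geodesically convex set containing a nonempty sublevel set of $f$, with $\operatorname{diam}G<\pi/(2\sqrt\kappa)$ if $\kappa>0$. Let $\{\lambda_k\}_{k\ge1}$ be positive with $\sum_{k=1}^\infty\lambda_k=+\infty$. Fix $x_0\in G$ and set $x_k:=J^f_{\lambda_k}(x_{k-1})$ for $k\ge1$, where $J^f_\lambda(x):=\operatorname{argmin}_{y\in G}\{f(y)+\frac1{2\lambda}d(x,y)^2\}$. Then $\lim_{k\to\infty}f(x_k)=\inf_{y\in G}f(y)$.
   Context: Minimal geodesics $x\#_ty$ satisfy $d(x\#_sy,x\#_ty)=|s-t|d(x,y)$; a set is geodesically convex if it contains all minimal geodesics between its points. A geodesic metric space is an Alexandrov space of curvature bounded above by $\kappa$ if for all $x,y,z$ (perimeter $<2\pi/\sqrt\kappa$ if $\kappa>0$), all $t\in[0,1]$ and all minimal geodesics, $d(y\#_tz,x)\le d_{\mathbb{M}^2(\kappa)}(\tilde y\#_t\tilde z,\tilde x)$, where $\tilde x\tilde y\tilde z$ is a comparison triangle with the same side lengths in the simply connected surface $\mathbb{M}^2(\kappa)$ of constant curvature $\kappa$. $f$ is convex if $f(x\#_ty)\le(1-t)f(x)+tf(y)$ along all minimal geodesics. The minimizer defining $J^f_\lambda(x)$ exists and is unique under these assumptions. *)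

From HB Require Import structures.
From mathcomp Require Import all_boot all_order all_algebra.
From mathcomp Require Import all_classical all_reals all_analysis.
Set Implicit Arguments. Unset Strict Implicit. Unset Printing Implicit Defensive.
Import Order.TTheory GRing.Theory Num.Theory.
Local Open Scope classical_set_scope.
Local Open Scope ring_scope.

Section MetricDefs.
Variables (R : realType) (X : Type) (d : X -> X -> R).

Definition is_metric : Prop :=
  (forall x y, 0 <= d x y) /\ (forall x y, d x y = 0 <-> x = y) /\
  (forall x y, d x y = d y x) /\ (forall x y z, d x z <= d x y + d y z).

Definition cvg_d (u : nat -> X) (l : X) : Prop :=
  forall e : R, 0 < e -> exists N, forall n, (N <= n)%N -> d (u n) l < e.

Definition cauchy_d (u : nat -> X) : Prop :=
  forall e : R, 0 < e -> exists N, forall m n, (N <= m)%N -> (N <= n)%N ->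
    d (u m) (u n) < e.

Definition complete_d : Prop := forall u, cauchy_d u -> exists l, cvg_d u l.

(* g : [0,1] -> X is a minimal geodesic from x to y:
   d(g s, g t) = |s - t| d(x,y); g t plays the role of x #_t y. *)
Definition min_geodesic (x y : X) (g : R -> X) : Prop :=
  g 0 = x /\ g 1 = y /\
  forall s t, 0 <= s <= 1 -> 0 <= t <= 1 -> d (g s) (g t) = `|s - t| * d x y.

Definition geodesic_space : Prop := forall x y, exists g, min_geodesic x y g.

Definition geod_convex (G : set X) : Prop :=
  forall x y g, G x -> G y -> min_geodesic x y g ->
    forall t, 0 <= t <= 1 -> G (g t).

Definition closed_d (G : set X) : Prop :=
  forall x, (forall e : R, 0 < e -> exists y, G y /\ d x y < e) -> G x.

End MetricDefs.

Section Model.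
Variable R : realType.
Definition P3 := (R * R * R)%type.
Definition dot3 (p q : P3) : R := p.1.1 * q.1.1 + p.1.2 * q.1.2 + p.2 * q.2.
Definition mink3 (p q : P3) : R := p.1.1 * q.1.1 + p.1.2 * q.1.2 - p.2 * q.2.
Definition sub3 (p q : P3) : P3 := (p.1.1 - q.1.1, p.1.2 - q.1.2, p.2 - q.2).
Definition arcosh (u : R) : R := ln (u + Num.sqrt (u ^+ 2 - 1)).

(* kappa = 0: the plane {z = 0}; kappa > 0: sphere of radius 1/sqrt kappa;
   kappa < 0: upper sheet of the hyperboloid <p,p>_M = 1/kappa. *)
Definition in_model (k : R) (p : P3) : Prop :=
  if k == 0 then p.2 = 0
  else if 0 < k then dot3 p p = k^-1
  else mink3 p p = k^-1 /\ 0 < p.2.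

Definition model_dist (k : R) (p q : P3) : R :=
  if k == 0 then Num.sqrt (dot3 (sub3 p q) (sub3 p q))
  else if 0 < k then acos (k * dot3 p q) / Num.sqrt k
  else arcosh (k * mink3 p q) / Num.sqrt (- k).

Definition model_geodesic (k : R) (p q : P3) (g : R -> P3) : Prop :=
  min_geodesic (model_dist k) p q g /\ forall t, 0 <= t <= 1 -> in_model k (g t).
End Model.

Definition alexandrov_le (R : realType) (X : Type) (d : X -> X -> R) (k : R) : Prop :=
  is_metric d /\ geodesic_space d /\
  forall x y z : X,
    (0 < k -> d x y + d y z + d z x < 2 * pi / Num.sqrt k) ->
    forall g, min_geodesic d y z g ->
    forall xt yt zt : P3 R, in_model k xt -> in_model k yt -> in_model k zt ->
      model_dist k xt yt = d x y -> model_dist k yt zt = d y z ->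
      model_dist k zt xt = d z x ->
    forall gt, model_geodesic k yt zt gt ->
    forall t, 0 <= t <= 1 -> d (g t) x <= model_dist k (gt t) xt.

From HB Require Import structures.
From mathcomp Require Import all_boot all_order all_algebra.
From mathcomp Require Import all_classical all_reals all_analysis.
From mathcomp Require Import ring lra.
Set Implicit Arguments. Unset Strict Implicit. Unset Printing Implicit Defensive.
Import Order.TTheory GRing.Theory Num.Theory.
Local Open Scope classical_set_scope.
Local Open Scope ring_scope.

(* The values f(x_n) decrease to some l.  If l > f(y) for a y in G, comparing
   the proximal point x_n with the points of the geodesic from x_n to y gives
   lam_n (f(x_n) - f(y)) <= d(x_{n-1}, x_n) d(x_n, y), while the descent
   estimates make sum d(x_{n-1}, x_n)^2 / lam_n finite.  Since d(x_n, y) grows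
   at most by the step lengths, the Abel-Dini theorem first shows that d(x_n, y)
   stays bounded, and then sum lam_n is finite, a contradiction. *)

Section ProximalSums.
Variable R : realType.
Implicit Types (u w a P : nat -> R).

Lemma sum_le_telescope w u N :
  (forall i, w i <= u i - u i.+1) -> \sum_(i < N) w i <= u 0%N - u N.
Proof.
move=> le_w; rewrite -(opprK (u 0%N)) addrC -(telescope_sumr (fun k => - u k)) //.
rewrite big_mkord; apply: ler_sum => i _; by rewrite opprK addrC.
Qed.

Lemma sum_ratio_ge P a m n :
  (forall i, 0 < P i) -> (forall i, 0 <= a i) -> (forall i, P i.+1 = P i + a i) ->
  (m <= n)%N -> (P n - P m) / P n <= \sum_(m <= i < n) a i / P i.+1.
Proof.
move=> P_gt0 a_ge0 P_succ le_mn.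
have P_nd : {homo P : i j / (i <= j)%N >-> i <= j}.
  by apply/nondecreasing_seqP => i; rewrite P_succ lerDl.
rewrite -(telescope_sumr _ le_mn) mulr_suml; apply: ler_sum_nat => i /andP[_ lt_in].
have -> : P i.+1 - P i = a i by rewrite P_succ addrAC subrr add0r.
by apply: ler_wpM2l => //; rewrite lef_pV2 ?posrE // P_nd.
Qed.

(* Abel-Dini theorem, in contrapositive form. *)
Lemma ratio_sums_bounded P a (K : R) :
  (forall i, 0 < P i) -> (forall i, 0 <= a i) -> (forall i, P i.+1 = P i + a i) ->
  (forall N, \sum_(i < N) a i / P i.+1 <= K) -> exists B, forall N, P N <= B.
Proof.
move=> P_gt0 a_ge0 P_succ le_K; apply/not_existsP => P_unbounded.
have P_nd : {homo P : i j / (i <= j)%N >-> i <= j}.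
  by apply/nondecreasing_seqP => i; rewrite P_succ lerDl.
have grow k : exists N, k%:R / 2 <= \sum_(i < N) a i / P i.+1.
  elim: k => [|k [N le_kN]]; first by exists 0%N; rewrite big_ord0 mul0r.
  have /existsNP [N' /negP] := P_unbounded (2 * P N); rewrite -ltNge => lt_PN'.
  have le_NN' : (N <= N')%N.
    by rewrite leqNgt; apply/negP => /ltnW /P_nd; have := P_gt0 N; lra.
  exists N'; rewrite -!(big_mkord xpredT (fun i => a i / P i.+1)).
  rewrite (big_cat_nat (leq0n N) le_NN') -natr1 mulrDl /=.
  apply: lerD; first by rewrite big_mkord.
  apply: le_trans (sum_ratio_ge P_gt0 a_ge0 P_succ le_NN').
  by rewrite ler_pdivlMr // mulrAC ler_pdivrMr //; have := P_gt0 N; lra.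
have [N] := grow (Num.truncn (2 * K)).+1.
by have := le_K N; have := truncnS_gt (2 * K); lra.
Qed.

Lemma ler_of_le_addr_tmul (A B r : R) :
  0 <= r -> (forall t, 0 < t <= 1 -> A <= B + t * r) -> A <= B.
Proof.
move=> r_ge0 le_AB; apply/ler_addgt0Pr => e e_gt0.
pose t := Num.min 1 (e / (r + 1)).
have t_gt0 : 0 < t by rewrite lt_min ltr01 divr_gt0 // ltr_wpDl.
apply: le_trans (le_AB t _) _; first by rewrite t_gt0 ge_min lexx.
rewrite lerD2l; apply: le_trans (_ : e / (r + 1) * r <= e).
  by rewrite ler_wpM2r // ge_min lexx orbT.
by rewrite mulrAC ler_pdivrMr ?ltr_wpDl // ler_wpM2l ?(ltW e_gt0) // lerDl.
Qed.

Lemma prox_sum_bounded (v D rho lam : nat -> R) (c l : R) :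
  c < l -> (forall i, 0 < lam i) -> (forall i, 0 <= D i) -> 0 <= rho 0%N ->
  (forall i, v i.+1 + D i ^+ 2 / (2 * lam i) <= v i) ->
  (forall i, l <= v i) ->
  (forall i, lam i * (v i.+1 - c) <= D i * rho i.+1) ->
  (forall i, rho i.+1 <= rho i + D i) ->
  exists B, forall N, \sum_(i < N) lam i <= B.
Proof.
move=> lt_cl lam_gt0 D_ge0 rho0_ge0 descent v_ge slope rho_succ.
set del := l - c; have del_gt0 : 0 < del by rewrite subr_gt0.
have energy N : \sum_(i < N) D i ^+ 2 / lam i <= 2 * v 0%N - 2 * l.
  suff : \sum_(i < N) D i ^+ 2 / lam i <= 2 * v 0%N - 2 * v N by have := v_ge N; lra.
  apply: (@sum_le_telescope (fun i => D i ^+ 2 / lam i) (fun i => 2 * v i)) => i.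
  have -> : D i ^+ 2 / lam i = 2 * (D i ^+ 2 / (2 * lam i)).
    by field; rewrite lt0r_neq0.
  by have := descent i; lra.
(* [E] dominates [rho] and turns [gap] into a bound on the Abel-Dini sums. *)
pose E i := 1 + rho 0%N + \sum_(j < i) D j.
have E_succ i : E i.+1 = E i + D i by rewrite /E big_ord_recr /= addrA.
have E_ge1 i : 1 <= E i by rewrite /E -addrA lerDl addr_ge0 // sumr_ge0.
have E_gt0 i : 0 < E i by apply: lt_le_trans (E_ge1 i).
have rho_le_E i : rho i <= E i.
  elim: i => [|i IH]; first by rewrite /E big_ord0 addr0 lerDr.
  by rewrite E_succ; apply: le_trans (rho_succ i) _; rewrite lerD2r.
have gap i : lam i * del <= D i * E i.+1.
  have := slope i; have := v_ge i.+1; have := D_ge0 i; have := rho_le_E i.+1.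
  have := lam_gt0 i; rewrite /del; nra.
have [B le_EB] : exists B, forall N, E N <= B.
  apply: (ratio_sums_bounded E_gt0 D_ge0 E_succ (K := (2 * v 0%N - 2 * l) / del)) => N.
  rewrite ler_pdivlMr // mulrC mulr_sumr; apply: le_trans (energy N).
  apply: ler_sum => i _; have := gap i; have := lam_gt0 i; have := E_gt0 i.+1; have := D_ge0 i.
  move=> hD hE hl hg; rewrite mulrA ler_pdivrMr // mulrAC ler_pdivlMr //.
  rewrite expr2; nra.
have B_gt0 : 0 < B by apply: lt_le_trans (le_EB 0%N).
have term i : lam i * del ^+ 2 <= B ^+ 2 * (D i ^+ 2 / lam i).
  have := gap i; have := lam_gt0 i; have := le_EB i.+1; have := D_ge0 i.
  move=> hD hE hl hg; rewrite [_ * (_ / _)]mulrA ler_pdivlMr //.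
  have le_B : lam i * del <= D i * B by apply: le_trans hg _; rewrite ler_wpM2l.
  have -> : lam i * del ^+ 2 * lam i = (lam i * del) ^+ 2 by ring.
  have -> : B ^+ 2 * D i ^+ 2 = (D i * B) ^+ 2 by ring.
  by rewrite ler_sqr ?nnegrE // mulr_ge0 // ltW.
exists (B ^+ 2 * (2 * v 0%N - 2 * l) / del ^+ 2) => N.
rewrite ler_pdivlMr ?exprn_gt0 // mulr_suml.
apply: le_trans (ler_wpM2l (sqr_ge0 B) (energy N)).
by rewrite mulr_sumr; apply: ler_sum => i _.
Qed.
End ProximalSums.

Local Open Scope ereal_scope.

Lemma nneseries_le_bound (R : realType) (u : nat -> R) (m : nat) (B : R) :
  (forall n, (m <= n)%N -> (0 <= u n)%R) ->
  (forall N, (\sum_(i < N) u (m + i)%N <= B)%R) -> \sum_(m <= n <oo) (u n)%:E <= B%:E.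
Proof.
move=> u_ge0 le_B.
have u_nneg n : (m <= n)%N -> xpredT n -> 0 <= (u n)%:E by rewrite lee_fin => /u_ge0.
rewrite (cvg_lim _ (ereal_nondecreasing_cvgn (ereal_nondecreasing_series u_nneg))) //.
apply: ge_ereal_sup => _ [N _ <-].
rewrite sumEFin lee_fin -{1}(add0n m) big_addn big_mkord.
by under eq_bigr do rewrite addnC; exact: le_B.
Qed.

Section ProximalPoint.
Variables (R : realType) (X : Type) (d : X -> X -> R) (f : X -> \bar R) (G : set X).
Hypothesis d_metric : is_metric d.
Hypothesis f_ninfty : forall x, f x != -oo.

Definition prox_point (lam : R) (p q : X) : Prop :=
  G q /\ forall y, G y ->
    f q + (d p q ^+ 2 / (2 * lam))%:E <= f y + (d p y ^+ 2 / (2 * lam))%:E.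

Lemma prox_point_descent lam p q :
  G p -> prox_point lam p q -> f q + (d p q ^+ 2 / (2 * lam))%:E <= f p.
Proof.
move=> Gp [_ q_min]; have [_ [d_eq0 _]] := d_metric.
by have := q_min p Gp; rewrite (proj2 (d_eq0 p p)) // expr0n /= mul0r adde0.
Qed.

Lemma prox_point_fin_num lam p q y : (0 < lam)%R -> G y -> f y \is a fin_num ->
  prox_point lam p q -> f q \is a fin_num.
Proof.
move=> lam_gt0 Gy fy_fin [_ q_min]; rewrite fin_numE f_ninfty /=.
have : f q <= f y + (d p y ^+ 2 / (2 * lam))%:E.
  apply: le_trans (q_min y Gy); rewrite leeDl // lee_fin.
  by rewrite divr_ge0 ?sqr_ge0 // mulr_ge0 // ltW.
by rewrite -(fineK fy_fin) -EFinD; case: (f q).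
Qed.

Hypothesis d_geodesic : geodesic_space d.
Hypothesis f_convex : forall x y g, min_geodesic d x y g ->
  forall t : R, (0 <= t <= 1)%R -> f (g t) <= (1 - t)%:E * f x + t%:E * f y.
Hypothesis G_convex : geod_convex d G.

Lemma prox_point_slope lam p q y (a c : R) : (0 < lam)%R -> prox_point lam p q ->
  G y -> f q = a%:E -> f y = c%:E -> (lam * (a - c) <= d p q * d q y)%R.
Proof.
move=> lam_gt0 [Gq q_min] Gy fq fy; have [d_ge0 [_ [_ d_tri]]] := d_metric.
have [g g_geod] := d_geodesic q y; have [g0 [_ g_dist]] := g_geod.
set D := d p q; set rho := d q y.
(* Compare q with g t, at distance t * rho from q towards y, and let t -> 0. *)
suff le_t t : (0 < t <= 1 -> 2 * lam * (a - c) <= 2 * D * rho + t * rho ^+ 2)%R.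
  have := ler_of_le_addr_tmul (sqr_ge0 rho) le_t; lra.
move=> /andP[t_gt0 t_le1]; have t01 : (0 <= t <= 1)%R by rewrite ltW.
have dqg : d q (g t) = (t * rho)%R.
  by rewrite -{1}g0 g_dist ?lexx ?ler01 // sub0r normrN gtr0_norm.
have dpg : (d p (g t) <= D + t * rho)%R by rewrite -dqg; exact: d_tri.
have : (a + D ^+ 2 / (2 * lam) <= (1 - t) * a + t * c + d p (g t) ^+ 2 / (2 * lam))%R.
  rewrite -lee_fin !EFinD -fq; apply: le_trans (q_min _ (G_convex Gq Gy g_geod t01)) _.
  by apply: leeD2r; rewrite !EFinM -fq -fy; exact: f_convex.
have : (d p (g t) ^+ 2 <= (D + t * rho) ^+ 2)%R.
  by rewrite ler_sqr ?nnegrE ?d_ge0 // addr_ge0 ?d_ge0 // mulr_ge0 ?d_ge0 // ltW.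
move=> le_sq le_conv.
have : (t * (a - c) <= ((D + t * rho) ^+ 2 - D ^+ 2) / (2 * lam))%R.
  have inv_ge0 : (0 <= (2 * lam)^-1)%R by rewrite invr_ge0 ltW ?mulr_gt0.
  have := ler_wpM2r inv_ge0 le_sq.
  by rewrite mulrBl; lra.
rewrite ler_pdivlMr ?mulr_gt0 // -(ler_pM2l t_gt0); lra.
Qed.

Lemma prox_iterates_inf_le (lam : nat -> R) (xs : nat -> X) y :
  (forall n, (1 <= n)%N -> (0 < lam n)%R) -> \sum_(1 <= n <oo) (lam n)%:E = +oo ->
  (forall n, (1 <= n)%N -> prox_point (lam n) (xs n.-1) (xs n)) ->
  G y -> ereal_inf (range (fun n => f (xs n.+1))) <= f y.
Proof.
move=> lam_gt0 lam_div xs_prox Gy; have [_ [_ [d_sym d_tri]]] := d_metric.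
case fy: (f y) => [c| |]; [|exact: leey|by have := f_ninfty y; rewrite fy].
set u := fun n => f (xs n.+1); rewrite leNgt; apply/negP => lt_c_inf.
have u_fin n : u n \is a fin_num.
  by apply: (prox_point_fin_num (lam_gt0 n.+1 _) Gy _ (xs_prox n.+1 _)); rewrite ?fy.
have u_ge_inf n : ereal_inf (range u) <= u n by apply: ereal_inf_lbound; exists n.
have inf_fin : ereal_inf (range u) \is a fin_num.
  rewrite fin_numE gt_eqF ?(lt_trans (ltNyr c) lt_c_inf) //= -ltey.
  by apply: le_lt_trans (u_ge_inf 0%N) _; rewrite ltey; case/andP: (u_fin 0%N).
have Gxs n : G (xs n.+1) by have [] := xs_prox n.+1 isT.
pose v n := fine (u n).
have uE n : u n = (v n)%:E by rewrite fineK.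
have [B le_B] : exists B, forall N, (\sum_(i < N) lam i.+2 <= B)%R.
  apply: (@prox_sum_bounded _ v (fun i => d (xs i.+1) (xs i.+2)) (fun i => d (xs i.+1) y)
    (fun i => lam i.+2) c (fine (ereal_inf (range u)))) => [|i|i|//|i|i|i|i].
  - by rewrite -lte_fin fineK.
  - exact: lam_gt0.
  - by have [] := d_metric.
  - by have [] := d_metric.
  - by rewrite -lee_fin EFinD -!uE (prox_point_descent (Gxs i) (xs_prox i.+2 isT)).
  - by rewrite -lee_fin fineK // -uE.
  - exact: (prox_point_slope (lam_gt0 i.+2 isT) (xs_prox i.+2 isT) Gy (uE i.+1) fy).
  - by rewrite addrC (d_sym (xs i.+1)).
have lam_ge0 n : (1 <= n)%N -> 0 <= (lam n)%:E by move=> /lam_gt0 /ltW; rewrite lee_fin.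
have le_tail : \sum_(2 <= n <oo) (lam n)%:E <= B%:E.
  by apply: nneseries_le_bound => [n /ltnW /lam_gt0 /ltW|N].
have := @nneseries_split _ (fun n => (lam n)%:E) 1 1 lam_ge0.
rewrite lam_div big_nat1 => div_eq.
have : +oo <= (lam 1%N + B)%:E by rewrite div_eq EFinD leeD2l.
by rewrite leye_eq.
Qed.
End ProximalPoint.

Theorem theorem5p1 (R : realType) (X : Type) (d : X -> X -> R) (k : R)
  (hX : alexandrov_le d k) (hcomplete : complete_d d)
  (f : X -> \bar R)
  (hf_ninf : forall x, f x != -oo)
  (hf_convex : forall x y g, min_geodesic d x y g ->
     forall t : R, (0 <= t <= 1)%R ->
       f (g t) <= (1 - t)%:E * f x + t%:E * f y)
  (hf_lsc : forall x (c : R), c%:E < f x ->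
     exists e : R, (0 < e)%R /\ forall y, (d x y < e)%R -> c%:E < f y)
  (hf_proper : exists x, f x != +oo)
  (G : set X) (hG_closed : closed_d d G) (hG_convex : geod_convex d G)
  (hG_sublevel : exists c : R, (exists x, f x <= c%:E) /\
                               (forall x, f x <= c%:E -> G x))
  (hG_diam : (0 < k)%R -> exists D : R,
       (D < pi / (2 * Num.sqrt k))%R /\
       forall x y, G x -> G y -> (d x y <= D)%R)
  (lam : nat -> R) (hlam_pos : forall n, (1 <= n)%N -> (0 < lam n)%R)
  (hlam_div : \sum_(1 <= n <oo) (lam n)%:E = +oo)
  (x0 : X) (hx0 : G x0) (xs : nat -> X) (hxs0 : xs 0%N = x0)
  (hxs : forall n, (1 <= n)%N -> G (xs n) /\
     forall y, G y ->
       f (xs n) + ((d (xs n.-1) (xs n)) ^+ 2 / (2 * lam n))%:E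
       <= f y + ((d (xs n.-1) y) ^+ 2 / (2 * lam n))%:E) :
  (fun n => f (xs n)) @ \oo --> ereal_inf [set f y | y in G].
Proof.
(* Curvature, completeness, lower semicontinuity, closedness and the diameter
   bound only ensure that the iterates exist; here they are given. *)
have [d_metric [d_geodesic _]] := hX.
have xs_prox n : (1 <= n)%N -> prox_point d f G (lam n) (xs n.-1) (xs n) := hxs n.
have G_xs n : G (xs n.+1) by have [] := xs_prox n.+1 isT.
pose u n := f (xs n.+1).
have u_noninc : {homo u : m n / (m <= n)%N >-> n <= m}.
  apply/nonincreasing_seqP => n.
  apply: le_trans (prox_point_descent d_metric (G_xs n) (xs_prox n.+2 isT)).
  by rewrite leeDl // lee_fin divr_ge0 ?sqr_ge0 // mulr_ge0 // ltW // hlam_pos.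
rewrite -cvg_shiftS; suff -> : ereal_inf [set f y | y in G] = ereal_inf (range u).
  exact: ereal_nonincreasing_cvgn.
apply/le_anti/andP; split.
  by apply: le_ereal_inf_tmp => _ [n _ <-]; apply: ereal_inf_lbound; exists (xs n.+1).
apply: le_ereal_inf_tmp => _ [y Gy <-].
exact: (prox_iterates_inf_le d_metric hf_ninf d_geodesic hf_convex hG_convex hlam_pos hlam_div).
Qed.
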